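(* Let $V$ be a finite set of variables and let $p$ be a probability distribution over $V$ faithful to an LWF chain graph $G$ with vertex set $V$, with all conditional independence queries answered correctly according to $p$. Then at the end of the skeleton recovery phase of the PC-like algorithm PC4LWF, the undirected graph $H$ has exactly the same adjacencies as $G$ (i.e. $H$ is the skeleton of $G$).
   Context: An LWF chain graph (CG) is a graph on a finite vertex set with directed ($\to$) and undirected ($-$) edges, at most one edge between two vertices, and no partially directed cycle (a cycle $v_1,\dots,v_n,v_{n+1}\equiv v_1$, $n\ge3$, of distinct vertices with each step $v_i-v_{i+1}$ or $v_i\to v_{i+1}$ and at least one step directed). Chain components are the connected components after deleting directed edges. $bd(A)$ is the set of parents or neighbours of vertices of $A$ outside $A$; $An(A)$ is the smallest set $B\supseteq A$ with $bd(b)\subseteq B$ for all $b\in B$. The moral graph $G^m$ joins $\alpha,\beta$ iff they are adjacent in $G$ or $\alpha\to\gamma_1$, $\beta\to\gamma_2$ for some $\gamma_1,\gamma_2$ in one chain component. For disjoint $A,B,S$, $S$ c-separates $A$ from $B$ if it separates them in $(G_{An(A\cup B\cup S)})^m$. $p$ is faithful to $G$ if $A\perp\!\!\!\perp B\mid S$ in $p$ iff $S$ c-separates $A$ from $B$ in $G$. Skeleton recovery of PC4LWF: let $H$ be the complete undirected graph on $V$. For $i=0,1,\dots,|V|-2$: while possible, select any ordered pair $(u,v)$ of vertices adjacent in the current $H$ with $|ad_H(u)\setminus\{v\}|\ge i$, where $ad_H(x)$ is the current set of vertices adjacent to $x$ in $H$; if there exists $S\subseteq ad_H(u)\setminus\{v\}$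 with $|S|=i$ and $u\perp\!\!\!\perp v\mid S$ in $p$, set $S_{uv}=S_{vu}=S$ and remove the edge $u-v$ from $H$. *)

From Stdlib Require Import Relations.
From mathcomp Require Import all_boot.

Set Implicit Arguments.
Unset Strict Implicit.
Unset Printing Implicit Defensive.

Section ChainGraphs.
Variable V : finType.

(* A mixed graph on V: [dir x y] means x -> y, [und x y] means x - y. *)
Record mgraph := MGraph { dir : rel V; und : rel V }.

Definition cyc_steps (s : seq V) : seq (V * V) := zip s (rot 1 s).

Definition pd_cycle (G : mgraph) (s : seq V) : bool :=
  [&& 3 <= size s, uniq s,
      all (fun e => und G e.1 e.2 || dir G e.1 e.2) (cyc_steps s)
    & has (fun e => dir G e.1 e.2) (cyc_steps s)].

Definition is_chain_graph (G : mgraph) : Prop :=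
  [/\ forall x, ~~ dir G x x /\ ~~ und G x x,
      forall x y, und G x y = und G y x,
      forall x y, ~~ (dir G x y && dir G y x) /\ ~~ (dir G x y && und G x y)
    & forall s, ~~ pd_cycle G s].

Definition adjacent (G : mgraph) (x y : V) : bool :=
  [|| dir G x y, dir G y x | und G x y].

Definition bd (G : mgraph) (A : {set V}) : {set V} :=
  [set x | (x \notin A) && [exists a in A, dir G x a || und G x a]].

Definition An (G : mgraph) (A : {set V}) : {set V} :=
  \bigcap_(B : {set V} | (A \subset B) && [forall b in B, bd G [set b] \subset B]) B.

(* Induced subgraph G_W (as a mixed graph on V with edges only inside W). *)
Definition induced (G : mgraph) (W : {set V}) : mgraph :=
  MGraph [rel x y | [&& x \in W, y \in W & dir G x y]]
         [rel x y | [&& x \in W, y \in W & und G x y]].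

Definition same_comp (G : mgraph) (x y : V) : bool := connect (und G) x y.

Definition moral (G : mgraph) (W : {set V}) : rel V :=
  fun a b =>
    let GW := induced G W in
    [&& a \in W, b \in W, a != b &
        adjacent GW a b ||
        [exists g1, exists g2,
           [&& dir GW a g1, dir GW b g2 & same_comp GW g1 g2]]].

Definition separates (M : rel V) (A B S : {set V}) : Prop :=
  forall a b, a \in A -> b \in B ->
    ~~ connect [rel x y | [&& M x y, x \notin S & y \notin S]] a b.

Definition c_separates (G : mgraph) (A B S : {set V}) : Prop :=
  separates (moral G (An G (A :|: B :|: S))) A B S.

(* Faithfulness of an independence model (the CI relation of p) to G. *)
Definition faithful (ci : {set V} -> {set V} -> {set V} -> Prop) (G : mgraph) :=
  forall A B S : {set V},
    [disjoint A & B] -> [disjoint A & S] -> [disjoint B & S] ->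
    (ci A B S <-> c_separates G A B S).

(* ---- Skeleton recovery of PC4LWF ----
   H is an undirected graph given by its (symmetric) set of ordered
   adjacent pairs. *)
Definition complete_ug : {set V * V} := [set e | e.1 != e.2].

Definition ad (H : {set V * V}) (x : V) : {set V} := [set y | (x, y) \in H].

Definition remove_edge (H : {set V * V}) (u v : V) : {set V * V} :=
  H :\ (u, v) :\ (v, u).

Definition pc_step (ci : {set V} -> {set V} -> {set V} -> Prop) (i : nat)
    (H H' : {set V * V}) : Prop :=
  exists u v (S : {set V}),
    [/\ (u, v) \in H, i <= #|ad H u :\ v|,
        S \subset ad H u :\ v, #|S| = i & ci [set u] [set v] S] /\
    H' = remove_edge H u v.

(* End of level i: every selectable pair has been tested and no test
   succeeds any more. *)
Definition level_done ci i H : Prop := forall H', ~ pc_step ci i H H'.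

Definition pc_level ci i (H H' : {set V * V}) : Prop :=
  clos_refl_trans _ (pc_step ci i) H H' /\ level_done ci i H'.

(* pc_after ci n H : H is a possible state after levels 0,...,n-1. *)
Fixpoint pc_after ci (n : nat) (H : {set V * V}) : Prop :=
  match n with
  | 0 => H = complete_ug
  | n'.+1 => exists H0, pc_after ci n' H0 /\ pc_level ci n' H0 H
  end.

(* Possible outputs of the skeleton recovery phase: levels i = 0..|V|-2. *)
Definition pc_skeleton_output ci (H : {set V * V}) : Prop :=
  pc_after ci (#|V| - 2).+1 H.

End ChainGraphs.

From mathcomp Require Import all_boot.
From Stdlib Require Import Relation_Operators.

Set Implicit Arguments.
Unset Strict Implicit.
Unset Printing Implicit Defensive.

(* Edges of G survive every test: adjacent vertices are c-separated by no set,
   so by faithfulness no independence query on them succeeds.  Conversely, let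
   x and y be non-adjacent.  As G has no partially directed cycle, x and y
   cannot both reach each other through a child along a partially directed
   path; say y is not reached from x in this way.  Then bd(x) c-separates x
   from y: a moral edge from x to a vertex outside bd(x) yields a child of x
   in the anterior set of {x, y} and bd(x), and that child would reach x, y
   or bd(x) along a partially directed path.  Since bd(x) stays inside the
   current neighbourhood of x and has at most |V| - 2 elements, the edge
   x - y is removed at level |bd(x)| at the latest. *)

Lemma all_zip_rcons (T : Type) (r : rel T) x p y :
  all (fun e => r e.1 e.2) (zip (x :: p) (rcons p y)) = path r x (rcons p y).
Proof. by elim: p x => [|z p IHp] x //=; rewrite IHp. Qed.

Section CyclicSteps.
Variable V : finType.

Lemma all_cyc_steps (r : rel V) x p :
  all (fun e => r e.1 e.2) (cyc_steps (x :: p)) = cycle r (x :: p).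
Proof. by rewrite /cyc_steps rot1_cons all_zip_rcons. Qed.

Lemma has_cyc_steps (r : rel V) x p :
  r (last x p) x -> has (fun e => r e.1 e.2) (cyc_steps (x :: p)).
Proof.
move=> r_last; rewrite -[has _ _]negbK -all_predC.
by rewrite (all_cyc_steps (fun a b => ~~ r a b)) /= rcons_path r_last andbF.
Qed.

End CyclicSteps.

Section MixedGraph.
Variables (V : finType) (G : mgraph V).

Definition pd_step : rel V := fun a b => dir G a b || und G a b.

Lemma in_bd1 x z : (z \in bd G [set x]) = (z != x) && pd_step z x.
Proof.
rewrite inE in_set1; congr (_ && _).
by apply/exists_inP/idP => [[a /set1P -> //] | zx]; exists x; rewrite ?set11.
Qed.

Lemma sub_An (A : {set V}) : A \subset An G A.
Proof. by apply/subsetP => a aA; apply/bigcapP => B /andP [/subsetP AB _]; exact: AB. Qed.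

Lemma An_pd_connect (A : {set V}) g : g \in An G A -> exists2 a, a \in A & connect pd_step g a.
Proof.
pose R := [set z | [exists a in A, connect pd_step z a]].
suff /subsetP AnR : An G A \subset R by move=> /AnR; rewrite inE => /exists_inP.
apply: bigcap_inf; apply/andP; split.
  by apply/subsetP => a aA; rewrite inE; apply/exists_inP; exists a.
apply/forall_inP => b; rewrite inE => /exists_inP [a aA ba].
apply/subsetP => z; rewrite in_bd1 inE => /andP [_ zb].
by apply/exists_inP; exists a => //; apply: connect_trans (connect1 zb) ba.
Qed.

Lemma adjacent_not_c_separated u v (S : {set V}) : u != v -> u \notin S -> v \notin S ->
  adjacent G u v -> ~ c_separates G [set u] [set v] S.
Proof.
move=> neq_uv uS vS adj_uv /(_ u v (set11 u) (set11 v)); apply/negP; rewrite negbK.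
set W := An G _; have /subsetP subW : _ \subset W := sub_An _.
have uW : u \in W by apply: subW; rewrite !inE eqxx.
have vW : v \in W by apply: subW; rewrite !inE eqxx orbT.
apply: connect1; rewrite /= uS vS /moral uW vW neq_uv /= andbT; apply/orP; left.
by move: adj_uv; rewrite /adjacent /= uW vW.
Qed.

Hypothesis und_sym : symmetric (und G).

Lemma adjacentC : symmetric (adjacent G).
Proof. by move=> a b; rewrite /adjacent und_sym orbCA. Qed.

Lemma pd_step_adjacent x z : pd_step z x -> adjacent G x z.
Proof. by rewrite /adjacent und_sym => /orP [] ->; rewrite ?orbT. Qed.

Lemma moral_nbr_child W x z :
  moral G W x z -> z \notin bd G [set x] -> exists2 g, dir G x g & g \in W.
Proof.
rewrite in_bd1 /moral /= => /and4P [xW zW neq_xz /orP [adj_xz | married]] z_nbd.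
  move: adj_xz z_nbd; rewrite /adjacent /= xW zW eq_sym neq_xz /pd_step /=.
  case/or3P => [dxz | -> // | uxz]; first by exists z.
  by rewrite und_sym uxz orbT.
by case/existsP: married => g /existsP [_ /and3P [/and3P [_ gW dxg] _ _]]; exists g.
Qed.

End MixedGraph.

Section ChainGraph.
Variables (V : finType) (G : mgraph V).
Hypothesis CG : is_chain_graph G.

Lemma chain_und_sym : symmetric (und G).
Proof. by case: CG. Qed.

Lemma no_pd_return u v : dir G u v -> ~~ connect (pd_step G) v u.
Proof.
case: CG => loopF und_sym two_edgesF no_cycle duv.
apply/negP => /connectP [p pv_u u_last].
case/shortenP: pv_u u_last => {}p pv_u uniq_vp _ u_last; rewrite {u}u_last in duv.
have vp_cycle : cycle (pd_step G) (v :: p) by rewrite /= rcons_path pv_u /pd_step duv.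
case: p => [|w [|w' p]] in pv_u uniq_vp vp_cycle duv *.
- by case: (loopF v); rewrite duv.
- case: (two_edgesF w v); rewrite duv /=.
  by move: pv_u => /= /andP [/orP [-> | uvw] _] //; rewrite und_sym uvw.
- move/negP: (no_cycle [:: v, w, w' & p]); apply; apply/and4P; split => //.
    rewrite (all_cyc_steps (fun a b => und G a b || dir G a b)).
    by apply: sub_path vp_cycle => a b; rewrite /pd_step orbC.
  exact: has_cyc_steps.
Qed.

Definition pd_desc x y := [exists g, dir G x g && connect (pd_step G) g y].

Lemma pd_desc_asym x y : pd_desc x y -> ~~ pd_desc y x.
Proof.
case/existsP => g /andP [dxg gy]; apply/existsP => -[h /andP [dyh hx]].
move/negP: (no_pd_return dxg); apply.
by apply: connect_trans gy (connect_trans (connect1 _) hx); rewrite /pd_step dyh.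
Qed.

Lemma child_notin_An x y g : dir G x g -> ~~ pd_desc x y ->
  g \notin An G ([set x] :|: [set y] :|: bd G [set x]).
Proof.
move=> dxg not_desc; apply/negP => /An_pd_connect [a].
rewrite !in_setU !in_set1 in_bd1 -orbA => /or3P [/eqP-> | /eqP-> | /andP [_ ax]] ga.
- by move/negP: (no_pd_return dxg); apply.
- by move/negP: not_desc; apply; apply/existsP; exists g; rewrite dxg.
- by move/negP: (no_pd_return dxg); apply; apply: connect_trans ga (connect1 ax).
Qed.

Lemma bd_c_separates x y : x != y -> ~~ pd_desc x y ->
  c_separates G [set x] [set y] (bd G [set x]).
Proof.
move=> neq_xy not_desc a b /set1P -> /set1P ->.
apply/negP => /connectP [[|z p]] /=; first by move=> _ eq_yx; rewrite eq_yx eqxx in neq_xy.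
case/andP => /and3P [xz _ z_nbd] _ _.
have [g dxg gW] := moral_nbr_child chain_und_sym xz z_nbd.
by rewrite (negbTE (child_notin_An dxg not_desc)) in gW.
Qed.

End ChainGraph.

Section PCLevels.
Variables (V : finType) (ci : {set V} -> {set V} -> {set V} -> Prop).

Lemma pc_step_sub i H H' : pc_step ci i H H' -> H' \subset H.
Proof. by case=> [u [v [S [_ ->]]]]; apply: subset_trans (subsetDl _ _) (subsetDl _ _). Qed.

Lemma pc_steps_sub i H H' : clos_refl_trans _ (pc_step ci i) H H' -> H' \subset H.
Proof.
elim=> [{}H {}H' /pc_step_sub // | // | H1 H2 H3 _ sub21 _ sub32].
exact: subset_trans sub32 sub21.
Qed.

Lemma pc_after_sub_level n H k : pc_after ci n H -> k < n ->
  exists2 Hk, pc_after ci k.+1 Hk & H \subset Hk.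
Proof.
elim: n H => [|n IHn] H //= [H0 [after_n level_n]].
rewrite ltnS leq_eqVlt => /orP [/eqP -> | lt_kn]; first by exists H => //; exists H0.
have [Hk after_k sub0k] := IHn H0 after_n lt_kn.
by exists Hk => //; apply: subset_trans (pc_steps_sub level_n.1) sub0k.
Qed.

Lemma level_done_sepset k H x y (S : {set V}) : level_done ci k H ->
  S \subset ad H x :\ y -> #|S| = k -> ci [set x] [set y] S -> (x, y) \notin H.
Proof.
move=> done_k sub_S card_S ci_S; apply/negP => xyH.
apply: (done_k (remove_edge H x y)); exists x, y, S; split=> //; split=> //.
by rewrite -card_S subset_leq_card.
Qed.

End PCLevels.

Section SkeletonRecovery.
Variables (V : finType) (G : mgraph V) (ci : {set V} -> {set V} -> {set V} -> Prop).
Hypotheses (CG : is_chain_graph G) (FA : faithful ci G).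

Definition contains_skeleton (H : {set V * V}) :=
  [/\ forall a, (a, a) \notin H, forall a b, ((a, b) \in H) = ((b, a) \in H)
    & forall a b, adjacent G a b -> (a, b) \in H].

Lemma complete_contains_skeleton : contains_skeleton (complete_ug V).
Proof.
case: CG => loopF _ _ _; split=> [a | a b | a b adj_ab]; rewrite !inE /=.
- by rewrite eqxx.
- by rewrite eq_sym.
- apply: contraTneq adj_ab => ->.
  by rewrite /adjacent; case: (loopF b) => /negbTE -> /negbTE ->.
Qed.

Lemma faithful1 u v (S : {set V}) : u != v -> u \notin S -> v \notin S ->
  ci [set u] [set v] S <-> c_separates G [set u] [set v] S.
Proof. by move=> neq_uv uS vS; apply: FA; rewrite disjoints1 ?in_set1. Qed.

Lemma pc_step_contains_skeleton i H H' :
  contains_skeleton H -> pc_step ci i H H' -> contains_skeleton H'.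
Proof.
move=> [irrH symH adjH] [u [v [S [[uvH _ sub_S _ ci_S] ->]]]].
have neq_uv : u != v by apply: contraTneq uvH => ->; apply: irrH.
have uS : u \notin S.
  by apply: contraNN (irrH u) => /(subsetP sub_S); rewrite !inE => /andP [_].
have vS : v \notin S by apply/negP => /(subsetP sub_S); rewrite !inE eqxx.
have nadj_uv : ~~ adjacent G u v.
  apply/negP => adj_uv; apply: (adjacent_not_c_separated neq_uv uS vS adj_uv).
  exact/(faithful1 neq_uv uS vS).
split=> [a | a b | a b adj_ab]; rewrite !inE.
- by rewrite (negbTE (irrH a)) !andbF.
- by rewrite symH !xpair_eqE; case: (a == v); case: (b == u); case: (a == u); case: (b == v).
- rewrite adjH // andbT; apply/andP; split; apply: contraNneq nadj_uv => -[ea eb].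
    by rewrite -ea -eb (adjacentC (chain_und_sym CG)).
  by rewrite -ea -eb.
Qed.

Lemma pc_steps_contains_skeleton i H H' : clos_refl_trans _ (pc_step ci i) H H' ->
  contains_skeleton H -> contains_skeleton H'.
Proof.
elim=> [{}H {}H' step | // | H1 H2 H3 _ IH12 _ IH23] skel; last exact/IH23/IH12.
exact: pc_step_contains_skeleton step.
Qed.

Lemma pc_after_contains_skeleton n H : pc_after ci n H -> contains_skeleton H.
Proof.
elim: n H => [|n IHn] H /=; first by move->; apply: complete_contains_skeleton.
by case=> H0 [after_n [steps _]]; apply: pc_steps_contains_skeleton steps (IHn H0 after_n).
Qed.

Lemma bd_sub_ad H x y : contains_skeleton H -> y \notin bd G [set x] ->
  bd G [set x] \subset ad H x :\ y.
Proof.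
case=> _ _ adjH y_nbd; apply/subsetP => z z_bd; rewrite !inE.
apply/andP; split; first by apply: contraNneq y_nbd => <-.
by apply: adjH; move: z_bd; rewrite in_bd1 => /andP [_ /(pd_step_adjacent (chain_und_sym CG))].
Qed.

Lemma card_bd1 x y : x != y -> y \notin bd G [set x] -> #|bd G [set x]| <= #|V| - 2.
Proof.
move=> neq_xy y_nbd; rewrite -(cardsC [set x; y]) cards2 neq_xy addKn subset_leq_card //.
apply/subsetP => z z_bd; rewrite !inE negb_or.
by apply/andP; split; apply: contraTneq z_bd => ->; rewrite // in_bd1 eqxx.
Qed.

Lemma pc_output_removes H x y : pc_skeleton_output ci H -> x != y ->
  ~~ adjacent G x y -> ~~ pd_desc G x y -> (x, y) \notin H.
Proof.
move=> out neq_xy nadj_xy not_desc.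
have y_nbd : y \notin bd G [set x].
  apply/negP; rewrite in_bd1 => /andP [_ /(pd_step_adjacent (chain_und_sym CG))].
  exact/negP.
have [Hk after_k sub_Hk] := pc_after_sub_level out (card_bd1 neq_xy y_nbd).
have [_ [_ [_ done_k]]] := after_k.
apply/negP => /(subsetP sub_Hk); apply/negP.
apply: (level_done_sepset done_k _ (erefl _)).
  exact: bd_sub_ad (pc_after_contains_skeleton after_k) y_nbd.
have x_nbd : x \notin bd G [set x] by rewrite in_bd1 eqxx.
exact: (faithful1 neq_xy x_nbd y_nbd).2 (bd_c_separates CG neq_xy not_desc).
Qed.

End SkeletonRecovery.

Theorem lemma1 (V : finType) (G : mgraph V)
    (ci : {set V} -> {set V} -> {set V} -> Prop) :
  is_chain_graph G -> faithful ci G ->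
  forall H : {set V * V}, pc_skeleton_output ci H ->
  forall x y : V, ((x, y) \in H) = adjacent G x y.
Proof.
move=> CG FA H out x y.
have [irrH symH adjH] := pc_after_contains_skeleton CG FA out.
have [adj_xy | nadj_xy] := boolP (adjacent G x y); first exact: adjH.
apply/negbTE; have [-> | neq_xy] := eqVneq x y; first exact: irrH.
have [desc_xy | not_desc_xy] := boolP (pd_desc G x y); last first.
  exact: (pc_output_removes CG FA out).
rewrite symH; apply: (pc_output_removes CG FA out).
- by rewrite eq_sym.
- by rewrite (adjacentC (chain_und_sym CG)).
- exact: pd_desc_asym.
Qed.
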